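(* For the finite-alphabet channel $P_{Y|X_1,X_2}$ and metric $q$, $\mathcal R_{LM}\subseteq\mathcal R^{bin}_{cog}$, where $\mathcal R_{LM}$ is the closure of the convex hull of the union over $P_{X_1},P_{X_2}$ of the sets of $(R_1,R_2)$ satisfying $R_1<\min_{f\in\mathcal D_{(1)}}[I_f(X_1;Y|X_2)+I_f(X_1;X_2)]$, $R_2<\min_{f\in\mathcal D_{(2)}}[I_f(X_2;Y|X_1)+I_f(X_1;X_2)]$, $R_1+R_2<\min_{f\in\mathcal D_{(0)}}[I_f(X_1,X_2;Y)+I_f(X_1;X_2)]$, with $P_{X_1,X_2,Y}=P_{X_1}P_{X_2}P_{Y|X_1,X_2}$ and $\mathcal D_{(1)}=\{f: f_{X_1}=P_{X_1}, f_{X_2,Y}=P_{X_2,Y},\mathbb E_f q\ge\mathbb E_P q\}$, $\mathcal D_{(2)}=\{f: f_{X_2}=P_{X_2}, f_{X_1,Y}=P_{X_1,Y},\mathbb E_f q\ge\mathbb E_P q\}$, $\mathcal D_{(0)}=\{f: f_{X_1}=P_{X_1}, f_{X_2}=P_{X_2}, f_Y=P_Y,\mathbb E_f q\ge\mathbb E_P q, I_f(X_1;Y)\le R_1, I_f(X_2;Y)\le R_2\}$; and $\mathcal R^{bin}_{cog}$ is the closure of the convex hull of $\bigcup_P\mathcal R^{bin,*}_{cog}(P)$ over all $P=P_{X_1,X_2}P_{Y|X_1,X_2}$, $\mathcal R^{bin,*}_{cog}(P)$ being the set of $(R_1,R_2)$ for which there exist $R_{1,a},R_{1,b}\ge0$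 with $R_1=R_{1,a}+R_{1,b}$, $R_{1,a}\le R_1'(P)$, $R_{1,b}+R_2\le R_2'(P)$, and either $R_{1,a}\le R_1''(P,R_{1,b}+R_2)$ or $R_{1,b}+R_2\le R_2''(P,R_{1,a})$.
   Context: All distributions $f$ are on $\mathcal X_1\times\mathcal X_2\times\mathcal Y$ (finite), $q:\mathcal X_1\times\mathcal X_2\times\mathcal Y\to\mathbb R$, expectations $\mathbb E_f q=\mathbb E_f q(X_1,X_2,Y)$. For a distribution $Q$: $\mathcal G_q(Q)=\{f: f_{X_1,X_2}=Q_{X_1,X_2},\ \mathbb E_f q\ge\mathbb E_Q q\}$; $\mathcal L_1(Q)=\{f\in\mathcal G_q(Q):f_{X_2,Y}=Q_{X_2,Y}\}$; $\mathcal L_2(Q)=\{f\in\mathcal G_q(Q):f_{X_1,Y}=Q_{X_1,Y}\}$; $\mathcal L_0(Q)=\{f\in\mathcal G_q(Q):f_Y=Q_Y\}$. $R_1'(P)=\min_{\tilde P\in\mathcal L_1(P)}I_{\tilde P}(X_1;Y,X_2)$; $R_2'(P)=\min_{\tilde P\in\mathcal L_2(P)}I_{\tilde P}(X_2;Y|X_1)$; $R_1''(P,R_2)=\min_{\tilde P\in\mathcal L_0(P)}[I_{\tilde P}(X_1;Y)+|I_{\tilde P}(X_2;Y|X_1)-R_2|^+]$; $R_2''(P,R_1)=\min_{\tilde P\in\mathcal L_0(P)}[I_{\tilde P}(X_2;Y)-I_{\tilde P}(X_2;X_1)+|I_{\tilde P}(X_1;Y,X_2)-R_1|^+]$; $|t|^+=\max\{0,t\}$.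 *)

From HB Require Import structures.
From mathcomp Require Import all_boot all_order all_algebra.
From mathcomp Require Import all_classical all_reals all_analysis.
Set Implicit Arguments. Unset Strict Implicit. Unset Printing Implicit Defensive.
Import Order.TTheory GRing.Theory Num.Theory numFieldNormedType.Exports.
Local Open Scope classical_set_scope.
Local Open Scope ring_scope.

Section InfoDefs.
Variable R : realType.

Definition is_pmf (T : finType) (p : T -> R) : Prop :=
  (forall t, 0 <= p t) /\ \sum_(t : T) p t = 1.

(* Shannon entropy (natural log; ln 0 = 0 gives the convention 0 ln 0 = 0) *)
Definition ent (T : finType) (p : T -> R) : R := - \sum_(t : T) p t * ln (p t).

Variables X1 X2 Y : finType.

Definition jdist := X1 -> X2 -> Y -> R.

Definition mall (f : jdist) : X1 * X2 * Y -> R := fun u => f u.1.1 u.1.2 u.2.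
Definition m12 (f : jdist) : X1 * X2 -> R := fun u => \sum_(y : Y) f u.1 u.2 y.
Definition m1Y (f : jdist) : X1 * Y -> R := fun u => \sum_(b : X2) f u.1 b u.2.
Definition m2Y (f : jdist) : X2 * Y -> R := fun u => \sum_(a : X1) f a u.1 u.2.
Definition m1 (f : jdist) : X1 -> R := fun a => \sum_(b : X2) \sum_(y : Y) f a b y.
Definition m2 (f : jdist) : X2 -> R := fun b => \sum_(a : X1) \sum_(y : Y) f a b y.
Definition mY (f : jdist) : Y -> R := fun y => \sum_(a : X1) \sum_(b : X2) f a b y.

Definition I_1_2 (f : jdist) : R := ent (m1 f) + ent (m2 f) - ent (m12 f).
Definition I_1_Y (f : jdist) : R := ent (m1 f) + ent (mY f) - ent (m1Y f).
Definition I_2_Y (f : jdist) : R := ent (m2 f) + ent (mY f) - ent (m2Y f).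
Definition I_1_Y_g2 (f : jdist) : R :=
  ent (m12 f) + ent (m2Y f) - ent (mall f) - ent (m2 f).
Definition I_2_Y_g1 (f : jdist) : R :=
  ent (m12 f) + ent (m1Y f) - ent (mall f) - ent (m1 f).
Definition I_12_Y (f : jdist) : R := ent (m12 f) + ent (mY f) - ent (mall f).
Definition I_1_2Y (f : jdist) : R := ent (m1 f) + ent (m2Y f) - ent (mall f).

Definition Eq (q : X1 -> X2 -> Y -> R) (f : jdist) : R :=
  \sum_(a : X1) \sum_(b : X2) \sum_(y : Y) f a b y * q a b y.

Definition pos_part (t : R) : R := Num.max 0 t.

(* min over a set of distributions, as an extended real (min of empty set = +oo) *)
Definition emin (D : set jdist) (g : jdist -> R) : \bar R :=
  ereal_inf [set (g f)%:E | f in D].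

Definition elt (x : R) (e : \bar R) : Prop := (x%:E < e)%E.
Definition ele (x : R) (e : \bar R) : Prop := (x%:E <= e)%E.

Definition is_channel (W : X1 -> X2 -> Y -> R) : Prop :=
  forall a b, is_pmf (W a b).

Variables (W : X1 -> X2 -> Y -> R) (q : X1 -> X2 -> Y -> R).

Definition Pprod (p1 : X1 -> R) (p2 : X2 -> R) : jdist :=
  fun a b y => p1 a * p2 b * W a b y.

Definition D1 (P : jdist) : set jdist :=
  [set f | is_pmf (mall f) /\ (forall a, m1 f a = m1 P a) /\
           (forall u, m2Y f u = m2Y P u) /\ Eq q P <= Eq q f].
Definition D2 (P : jdist) : set jdist :=
  [set f | is_pmf (mall f) /\ (forall b, m2 f b = m2 P b) /\
           (forall u, m1Y f u = m1Y P u) /\ Eq q P <= Eq q f].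
Definition D0 (P : jdist) (R1 R2 : R) : set jdist :=
  [set f | is_pmf (mall f) /\ (forall a, m1 f a = m1 P a) /\
           (forall b, m2 f b = m2 P b) /\ (forall y, mY f y = mY P y) /\
           Eq q P <= Eq q f /\ I_1_Y f <= R1 /\ I_2_Y f <= R2].

Definition RLM_P (p1 : X1 -> R) (p2 : X2 -> R) : set (R * R) :=
  let P := Pprod p1 p2 in
  [set r | 0 <= r.1 /\ 0 <= r.2 /\
     elt r.1 (emin (D1 P) (fun f => I_1_Y_g2 f + I_1_2 f)) /\
     elt r.2 (emin (D2 P) (fun f => I_2_Y_g1 f + I_1_2 f)) /\
     elt (r.1 + r.2) (emin (D0 P r.1 r.2) (fun f => I_12_Y f + I_1_2 f))].

Definition Pjoint (p12 : X1 -> X2 -> R) : jdist := fun a b y => p12 a b * W a b y.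

Definition G (P : jdist) : set jdist :=
  [set f | is_pmf (mall f) /\ (forall u, m12 f u = m12 P u) /\ Eq q P <= Eq q f].
Definition L1 (P : jdist) : set jdist :=
  [set f | G P f /\ forall u, m2Y f u = m2Y P u].
Definition L2 (P : jdist) : set jdist :=
  [set f | G P f /\ forall u, m1Y f u = m1Y P u].
Definition L0 (P : jdist) : set jdist :=
  [set f | G P f /\ forall y, mY f y = mY P y].

Definition R1' (P : jdist) : \bar R := emin (L1 P) I_1_2Y.
Definition R2' (P : jdist) : \bar R := emin (L2 P) I_2_Y_g1.
Definition R1'' (P : jdist) (R2 : R) : \bar R :=
  emin (L0 P) (fun f => I_1_Y f + pos_part (I_2_Y_g1 f - R2)).
Definition R2'' (P : jdist) (R1 : R) : \bar R :=
  emin (L0 P) (fun f => I_2_Y f - I_1_2 f + pos_part (I_1_2Y f - R1)).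

Definition Rcog_P (p12 : X1 -> X2 -> R) : set (R * R) :=
  let P := Pjoint p12 in
  [set r | 0 <= r.2 /\ exists R1a R1b : R,
     0 <= R1a /\ 0 <= R1b /\ r.1 = R1a + R1b /\
     ele R1a (R1' P) /\ ele (R1b + r.2) (R2' P) /\
     (ele R1a (R1'' P (R1b + r.2)) \/ ele (R1b + r.2) (R2'' P R1a))].

End InfoDefs.

Definition conv2 (R : realType) (A : set (R * R)) : set (R * R) :=
  [set z | exists (n : nat) (w : 'I_n -> R) (a : 'I_n -> R * R),
     (forall i, 0 <= w i) /\ \sum_(i < n) w i = 1 /\ (forall i, A (a i)) /\
     z = (\sum_(i < n) w i * (a i).1, \sum_(i < n) w i * (a i).2)].

Definition R_LM (R : realType) (X1 X2 Y : finType)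
  (W q : X1 -> X2 -> Y -> R) : set (R * R) :=
  @closure (R * R)%type (conv2 (\bigcup_(p in [set p : (X1 -> R) * (X2 -> R) |
                                   is_pmf p.1 /\ is_pmf p.2])
                     RLM_P W q p.1 p.2)).

Definition R_cog_bin (R : realType) (X1 X2 Y : finType)
  (W q : X1 -> X2 -> Y -> R) : set (R * R) :=
  @closure (R * R)%type (conv2 (\bigcup_(p in [set p : X1 -> X2 -> R |
                                   is_pmf (fun u : X1 * X2 => p u.1 u.2)])
                     Rcog_P W q p)).

From HB Require Import structures.
From mathcomp Require Import all_boot all_order all_algebra.
From mathcomp Require Import all_classical all_reals all_analysis.
From mathcomp Require Import ring lra.
Set Implicit Arguments. Unset Strict Implicit. Unset Printing Implicit Defensive.
Import Order.TTheory GRing.Theory Num.Theory numFieldNormedType.Exports.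
Local Open Scope classical_set_scope.
Local Open Scope ring_scope.

(* For a product input distribution P = P_X1 P_X2 W, every f in G_q(P) has
   independent inputs, so I_f(X1;X2) = 0.  Take R_1a = R_1 and R_1b = 0.  The
   bound R_1 <= R_1'(P) follows from L_1(P) being contained in D_(1) and the
   chain rule I(X1;Y,X2) = I(X1;Y|X2) + I(X1;X2); the bound R_2 <= R_2'(P)
   from L_2(P) being contained in D_(2).  If both R_1 <= R_1''(P,R_2) and
   R_2 <= R_2''(P,R_1) failed, there would be f, g in L_0(P) with
   I_f(X1;Y) < R_1, I_g(X2;Y) < R_2 and I(X1,X2;Y) < R_1 + R_2 at both.  Since
   L_0(P) fixes the X1, X2 and Y marginals, I(X1;Y), I(X2;Y) and I(X1,X2;Y) are
   convex along the segment from f to g, and I(X1;Y) + I(X2;Y) <= I(X1,X2;Y)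
   because I(X1;X2|Y) >= 0 = I(X1;X2).  Hence some mixture of f and g lies in
   D_(0)(R_1,R_2) with I(X1,X2;Y) < R_1 + R_2, against the sum-rate bound. *)

Lemma gibbs_pointwise (R : realType) (x z : R) :
  0 <= x -> 0 <= z -> (0 < x -> 0 < z) -> x - z <= x * ln x - x * ln z.
Proof.
move=> x0 z0 xz; have [->|xn0] := eqVneq x 0.
  by rewrite !mul0r subrr sub0r oppr_le0.
have xgt0 : 0 < x by rewrite lt0r xn0.
have zgt0 := xz xgt0.
have := expR_ge1Dx (ln (z / x)).
rewrite lnK ?posrE ?divr_gt0 // ln_div ?posrE // => h.
have : x * (1 + (ln z - ln x)) <= x * (z / x) by rewrite ler_pM2l.
rewrite mulrCA divff ?mulr1 //; lra.
Qed.

Lemma gibbs_pointwise_ratio (R : realType) (x a b m : R) :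
  0 <= x -> 0 <= a -> 0 <= b -> 0 <= m ->
  (0 < x -> [/\ 0 < a, 0 < b & 0 < m]) ->
  x - a * b / m <= x * ln x + x * ln m - x * ln a - x * ln b.
Proof.
move=> x0 a0 b0 m0 h; have [->|xn0] := eqVneq x 0.
  by rewrite !mul0r !addr0 !subr0 sub0r oppr_le0 divr_ge0 ?mulr_ge0.
have [agt0 bgt0 mgt0] : [/\ 0 < a, 0 < b & 0 < m] by apply: h; rewrite lt0r xn0.
have zgt0 : 0 < a * b / m by rewrite divr_gt0 ?mulr_gt0.
apply: (le_trans (gibbs_pointwise x0 (ltW zgt0) (fun _ => zgt0))).
rewrite ln_div ?posrE ?mulr_gt0 // lnM ?posrE //; lra.
Qed.

Lemma convex_comb_crossing (R : realFieldType) (a1 a2 b1 b2 r1 r2 : R) :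
  a1 < r1 < b1 -> a1 + a2 < r1 + r2 -> b1 + b2 < r1 + r2 ->
  exists2 l, 0 < l < 1 & l * a1 + (1 - l) * b1 = r1 /\ l * a2 + (1 - l) * b2 < r2.
Proof.
move=> /andP[a1r1 r1b1] ha hb; have ba_gt0 : 0 < b1 - a1 by lra.
set l := (b1 - r1) / (b1 - a1).
have el : l * (b1 - a1) = b1 - r1 by rewrite divfK // gt_eqF.
have l_gt0 : 0 < l by rewrite divr_gt0 // subr_gt0.
have l_lt1 : l < 1 by rewrite ltr_pdivrMr // mul1r; lra.
exists l; first by rewrite l_gt0 l_lt1.
have e1 : l * a1 + (1 - l) * b1 = r1 by lra.
split=> //; nra.
Qed.

Lemma ler_sum_term (R : numDomainType) (T : finType) (F : T -> R) (i : T) :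
  (forall j, 0 <= F j) -> F i <= \sum_j F j.
Proof. by move=> F0; rewrite (bigD1 i) //= lerDl sumr_ge0. Qed.

Lemma sumr_mix (R : pzRingType) (T : finType) (F G : T -> R) (l : R) :
  \sum_t (l * F t + (1 - l) * G t) = l * \sum_t F t + (1 - l) * \sum_t G t.
Proof. by rewrite big_split -!mulr_sumr. Qed.

Lemma sum_pair (R : nmodType) (A B : finType) (F : A * B -> R) :
  \sum_u F u = \sum_a \sum_b F (a, b).
Proof. by rewrite pair_bigA; apply: eq_bigr => -[]. Qed.

Lemma ent_concave (R : realType) (T : finType) (p q : T -> R) (l : R) :
  0 < l < 1 -> (forall t, 0 <= p t) -> (forall t, 0 <= q t) ->
  l * ent p + (1 - l) * ent q <= ent (fun t => l * p t + (1 - l) * q t).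
Proof.
move=> /andP[l0 l1] p0 q0; rewrite /ent !mulrN -opprD lerN2 -sumr_mix.
apply: ler_sum => t _; set w := l * p t + (1 - l) * q t.
have l1' : 0 < 1 - l by rewrite subr_gt0.
have w0 : 0 <= w by rewrite addr_ge0 // mulr_ge0 // ltW.
have hp : p t - w <= p t * ln (p t) - p t * ln w.
  apply: gibbs_pointwise => // pt_gt0.
  by rewrite /w ltr_pwDl ?mulr_gt0 // mulr_ge0 // ltW.
have hq : q t - w <= q t * ln (q t) - q t * ln w.
  apply: gibbs_pointwise => // qt_gt0.
  by rewrite /w ltr_pwDr ?mulr_gt0 // mulr_ge0 // ltW.
have -> : w * ln w = l * (p t * ln w) + (1 - l) * (q t * ln w) by rewrite /w; ring.
have : l * (p t - w) + (1 - l) * (q t - w) = 0 by rewrite /w; ring.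
have : l * (p t - w) <= l * (p t * ln (p t) - p t * ln w) by rewrite ler_pM2l.
have : (1 - l) * (q t - w) <= (1 - l) * (q t * ln (q t) - q t * ln w).
  by rewrite ler_pM2l.
lra.
Qed.

Section Marginals.
Variables (R : realType) (X1 X2 Y : finType).
Implicit Types f g : jdist R X1 X2 Y.

Lemma sum_triple (F : X1 * X2 * Y -> R) :
  \sum_u F u = \sum_a \sum_b \sum_y F (a, b, y).
Proof. by rewrite sum_pair sum_pair. Qed.

Lemma pmf_ge0 f : is_pmf (mall f) -> forall a b y, 0 <= f a b y.
Proof. by case=> f0 _ a b y; exact: (f0 (a, b, y)). Qed.

Lemma m1Y_ge0 f : is_pmf (mall f) -> forall u, 0 <= m1Y f u.
Proof. by move=> hf u; apply: sumr_ge0 => b _; exact: pmf_ge0. Qed.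

Lemma m2Y_ge0 f : is_pmf (mall f) -> forall u, 0 <= m2Y f u.
Proof. by move=> hf u; apply: sumr_ge0 => a _; exact: pmf_ge0. Qed.

Lemma mY_ge0 f : is_pmf (mall f) -> forall y, 0 <= mY f y.
Proof. by move=> hf y; do 2![apply: sumr_ge0 => ? _]; exact: pmf_ge0. Qed.

Lemma ent_mall f :
  ent (mall f) = - \sum_a \sum_b \sum_y f a b y * ln (f a b y).
Proof. by rewrite /ent sum_triple. Qed.

Lemma ent_m1Y f :
  ent (m1Y f) = - \sum_a \sum_b \sum_y f a b y * ln (m1Y f (a, y)).
Proof.
rewrite /ent sum_pair; congr (- _); apply: eq_bigr => a _.
by rewrite exchange_big; apply: eq_bigr => y _; rewrite mulr_suml.
Qed.

Lemma ent_m2Y f :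
  ent (m2Y f) = - \sum_a \sum_b \sum_y f a b y * ln (m2Y f (b, y)).
Proof.
rewrite /ent sum_pair [in RHS]exchange_big; congr (- _); apply: eq_bigr => b _.
by rewrite exchange_big; apply: eq_bigr => y _; rewrite mulr_suml.
Qed.

Lemma ent_mY f :
  ent (mY f) = - \sum_a \sum_b \sum_y f a b y * ln (mY f y).
Proof.
rewrite /ent; congr (- _).
transitivity (\sum_y \sum_a \sum_b f a b y * ln (mY f y)).
  apply: eq_bigr => y _; rewrite mulr_suml.
  by apply: eq_bigr => a _; rewrite mulr_suml.
by rewrite exchange_big; apply: eq_bigr => a _; rewrite exchange_big.
Qed.

Definition I_1_2_gY f : R := ent (m1Y f) + ent (m2Y f) - ent (mall f) - ent (mY f).

Lemma sum_mY f : \sum_y mY f y = \sum_a \sum_b \sum_y f a b y.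
Proof. by rewrite /mY exchange_big; apply: eq_bigr => a _; rewrite exchange_big. Qed.

Lemma sum_m1Y_m2Y_div_mY f :
  \sum_a \sum_b \sum_y m1Y f (a, y) * m2Y f (b, y) / mY f y = \sum_y mY f y.
Proof.
transitivity (\sum_y \sum_a \sum_b m1Y f (a, y) * m2Y f (b, y) / mY f y).
  by rewrite [RHS]exchange_big; apply: eq_bigr => a _; rewrite exchange_big.
apply: eq_bigr => y _.
transitivity ((\sum_a m1Y f (a, y)) * (\sum_b m2Y f (b, y)) / mY f y).
  by rewrite !mulr_suml; apply: eq_bigr => a _; rewrite mulr_sumr mulr_suml.
have -> : \sum_b m2Y f (b, y) = mY f y by rewrite /m2Y /mY exchange_big.
have -> : \sum_a m1Y f (a, y) = mY f y by [].
have [->|mYn0] := eqVneq (mY f y) 0; first by rewrite !mul0r.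
by rewrite mulfK.
Qed.

Lemma I_1_2_gY_ge0 f : is_pmf (mall f) -> 0 <= I_1_2_gY f.
Proof.
(* Gibbs' inequality of f against z, whose total mass is that of f *)
move=> hf; have f0 := pmf_ge0 hf.
pose z a b y := m1Y f (a, y) * m2Y f (b, y) / mY f y.
have sum_sub_z0 : \sum_a \sum_b \sum_y (f a b y - z a b y) = 0.
  under eq_bigr => a _ do under eq_bigr => b _ do rewrite sumrB.
  under eq_bigr => a _ do rewrite sumrB.
  by rewrite sumrB sum_m1Y_m2Y_div_mY sum_mY subrr.
have -> : I_1_2_gY f = \sum_a \sum_b \sum_y (f a b y * ln (f a b y)
      + f a b y * ln (mY f y) - f a b y * ln (m1Y f (a, y))
      - f a b y * ln (m2Y f (b, y))).
  rewrite /I_1_2_gY ent_mall ent_m1Y ent_m2Y ent_mY.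
  rewrite -!sumrN -!big_split /=; apply: eq_bigr => a _.
  rewrite -!sumrN -!big_split /=; apply: eq_bigr => b _.
  rewrite -!sumrN -!big_split /=; apply: eq_bigr => y _.
  ring.
rewrite -[leLHS]sum_sub_z0; do 3![apply: ler_sum => ? _].
apply: gibbs_pointwise_ratio; rewrite ?f0 ?m1Y_ge0 ?m2Y_ge0 ?mY_ge0 //.
move=> fpos; split; apply: (lt_le_trans fpos).
- exact: (@ler_sum_term _ _ (fun b => f _ b _)).
- exact: (@ler_sum_term _ _ (fun a => f a _ _)).
- apply: (le_trans (@ler_sum_term _ _ (fun b => f _ b _) _ _)) => //.
  apply: (@ler_sum_term _ _ (fun a => \sum_b f a b _)) => a.
  by apply: sumr_ge0.
Qed.

Lemma I_1_Y_add_I_2_Y_le f :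
  is_pmf (mall f) -> I_1_Y f + I_2_Y f <= I_12_Y f + I_1_2 f.
Proof.
move/I_1_2_gY_ge0; rewrite /I_1_2_gY /I_1_Y /I_2_Y /I_12_Y /I_1_2; lra.
Qed.

Lemma I_12_Y_chain1 f : I_12_Y f = I_1_Y f + I_2_Y_g1 f.
Proof. by rewrite /I_12_Y /I_1_Y /I_2_Y_g1; ring. Qed.

Lemma I_12_Y_chain2 f : I_12_Y f + I_1_2 f = I_2_Y f + I_1_2Y f.
Proof. by rewrite /I_12_Y /I_2_Y /I_1_2Y /I_1_2; ring. Qed.

Lemma I_1_2Y_chain f : I_1_2Y f = I_1_Y_g2 f + I_1_2 f.
Proof. by rewrite /I_1_2Y /I_1_Y_g2 /I_1_2; ring. Qed.

Lemma m1_eq_of_m12 f g : m12 f = m12 g -> m1 f = m1 g.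
Proof. by move=> e; apply: funext => a; apply: eq_bigr => b _; rewrite -/(m12 f (a, b)) e. Qed.

Lemma m2_eq_of_m12 f g : m12 f = m12 g -> m2 f = m2 g.
Proof.
move=> e; apply: funext => b; apply: eq_bigr => a _.
by rewrite -/(m12 f (a, b)) e.
Qed.

Lemma I_1_2_eq_of_m12 f g : m12 f = m12 g -> I_1_2 f = I_1_2 g.
Proof. by move=> e; rewrite /I_1_2 (m1_eq_of_m12 e) (m2_eq_of_m12 e) e. Qed.

End Marginals.

Section Mixtures.
Variables (R : realType) (X1 X2 Y : finType).
Implicit Types f g : jdist R X1 X2 Y.

Definition mix (l : R) f g : jdist R X1 X2 Y :=
  fun a b y => l * f a b y + (1 - l) * g a b y.

Lemma mix_idem (T : Type) (p : T -> R) (l : R) :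
  (fun t => l * p t + (1 - l) * p t) = p.
Proof. by apply: funext => t; ring. Qed.

Lemma mall_mix l f g :
  mall (mix l f g) = fun u => l * mall f u + (1 - l) * mall g u.
Proof. by []. Qed.

Lemma m12_mix l f g :
  m12 (mix l f g) = fun u => l * m12 f u + (1 - l) * m12 g u.
Proof. by apply: funext => u; exact: sumr_mix. Qed.

Lemma m1Y_mix l f g :
  m1Y (mix l f g) = fun u => l * m1Y f u + (1 - l) * m1Y g u.
Proof. by apply: funext => u; exact: sumr_mix. Qed.

Lemma m2Y_mix l f g :
  m2Y (mix l f g) = fun u => l * m2Y f u + (1 - l) * m2Y g u.
Proof. by apply: funext => u; exact: sumr_mix. Qed.

Lemma m1_mix l f g : m1 (mix l f g) = fun a => l * m1 f a + (1 - l) * m1 g a.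
Proof.
by apply: funext => a; rewrite /m1 -sumr_mix; apply: eq_bigr => b _; exact: sumr_mix.
Qed.

Lemma m2_mix l f g : m2 (mix l f g) = fun b => l * m2 f b + (1 - l) * m2 g b.
Proof.
by apply: funext => b; rewrite /m2 -sumr_mix; apply: eq_bigr => a _; exact: sumr_mix.
Qed.

Lemma mY_mix l f g : mY (mix l f g) = fun y => l * mY f y + (1 - l) * mY g y.
Proof.
by apply: funext => y; rewrite /mY -sumr_mix; apply: eq_bigr => a _; exact: sumr_mix.
Qed.

Lemma Eq_mix (q : X1 -> X2 -> Y -> R) l f g :
  Eq q (mix l f g) = l * Eq q f + (1 - l) * Eq q g.
Proof.
rewrite /Eq -sumr_mix; apply: eq_bigr => a _; rewrite -sumr_mix.
apply: eq_bigr => b _; rewrite -sumr_mix; apply: eq_bigr => y _.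
by rewrite /mix; ring.
Qed.

Lemma pmf_mix l f g : 0 <= l <= 1 ->
  is_pmf (mall f) -> is_pmf (mall g) -> is_pmf (mall (mix l f g)).
Proof.
move=> /andP[l0 l1] [f0 f1] [g0 g1]; split => [u|].
  by rewrite mall_mix addr_ge0 // mulr_ge0 // subr_ge0.
by rewrite mall_mix sumr_mix f1 g1; ring.
Qed.

Section Convexity.
Variables (l : R) (f g : jdist R X1 X2 Y).
Hypotheses (l01 : 0 < l < 1) (pmf_f : is_pmf (mall f)) (pmf_g : is_pmf (mall g)).
Hypothesis mY_fg : mY f = mY g.

Lemma I_1_Y_mix : m1 f = m1 g ->
  I_1_Y (mix l f g) <= l * I_1_Y f + (1 - l) * I_1_Y g.
Proof.
move=> m1_fg; rewrite /I_1_Y m1_mix mY_mix m1Y_mix -m1_fg -mY_fg !mix_idem.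
have := ent_concave l01 (m1Y_ge0 pmf_f) (m1Y_ge0 pmf_g); lra.
Qed.

Lemma I_2_Y_mix : m2 f = m2 g ->
  I_2_Y (mix l f g) <= l * I_2_Y f + (1 - l) * I_2_Y g.
Proof.
move=> m2_fg; rewrite /I_2_Y m2_mix mY_mix m2Y_mix -m2_fg -mY_fg !mix_idem.
have := ent_concave l01 (m2Y_ge0 pmf_f) (m2Y_ge0 pmf_g); lra.
Qed.

Lemma I_12_Y_mix : m12 f = m12 g ->
  I_12_Y (mix l f g) <= l * I_12_Y f + (1 - l) * I_12_Y g.
Proof.
move=> m12_fg; rewrite /I_12_Y m12_mix mY_mix mall_mix -m12_fg -mY_fg !mix_idem.
by have := ent_concave l01 (fun u => (pmf_f.1 u)) (fun u => pmf_g.1 u); lra.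
Qed.

End Convexity.
End Mixtures.

Section IndependentInputs.
Variables (R : realType) (X1 X2 Y : finType) (W : X1 -> X2 -> Y -> R).
Variables (p1 : X1 -> R) (p2 : X2 -> R).
Hypotheses (pmf_p1 : is_pmf p1) (pmf_p2 : is_pmf p2).

Lemma pmf_prod : is_pmf (fun u : X1 * X2 => p1 u.1 * p2 u.2).
Proof.
case: pmf_p1 pmf_p2 => [p10 p11] [p20 p21]; split => [u|]; first exact: mulr_ge0.
rewrite sum_pair -p11; apply: eq_bigr => a _.
by rewrite /= -mulr_sumr p21 mulr1.
Qed.

Lemma ent_prod : ent (fun u : X1 * X2 => p1 u.1 * p2 u.2) = ent p1 + ent p2.
Proof.
case: pmf_p1 pmf_p2 => [p10 p11] [p20 p21]; rewrite /ent sum_pair -opprD.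
congr (- _).
transitivity (\sum_a \sum_b (p1 a * ln (p1 a) * p2 b + p1 a * (p2 b * ln (p2 b)))).
  apply: eq_bigr => a _; apply: eq_bigr => b _ /=.
  have [->|n1] := eqVneq (p1 a) 0; first by rewrite !(mulr0, mul0r, add0r).
  have [->|n2] := eqVneq (p2 b) 0; first by rewrite !(mulr0, mul0r, addr0).
  by rewrite lnM ?posrE ?lt0r ?n1 ?n2 ?p10 ?p20 //; ring.
under eq_bigr => a _ do rewrite big_split /= -!mulr_sumr p21 mulr1.
by rewrite big_split /= -mulr_suml p11 mul1r.
Qed.

Hypothesis W_channel : is_channel W.

Lemma m12_Pprod : m12 (Pprod W p1 p2) = fun u => p1 u.1 * p2 u.2.
Proof.
apply: funext => u; rewrite /m12 /Pprod -mulr_sumr.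
by case: (W_channel u.1 u.2) => _ ->; rewrite mulr1.
Qed.

Lemma I_1_2_Pprod : I_1_2 (Pprod W p1 p2) = 0.
Proof.
have m1P : m1 (Pprod W p1 p2) = p1.
  apply: funext => a; rewrite -[RHS]mulr1 -pmf_p2.2 mulr_sumr.
  by apply: eq_bigr => b _; rewrite -/(m12 _ (a, b)) m12_Pprod.
have m2P : m2 (Pprod W p1 p2) = p2.
  apply: funext => b; rewrite -[RHS]mul1r -pmf_p1.2 mulr_suml.
  by apply: eq_bigr => a _; rewrite -/(m12 _ (a, b)) m12_Pprod.
by rewrite /I_1_2 m1P m2P m12_Pprod ent_prod; ring.
Qed.

End IndependentInputs.

Lemma pos_part_ge0 (R : realType) (t : R) : 0 <= pos_part t.
Proof. by rewrite /pos_part le_max lexx. Qed.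

Lemma le_pos_part (R : realType) (t : R) : t <= pos_part t.
Proof. by rewrite /pos_part le_max lexx orbT. Qed.

Section RateBounds.
Variables (R : realType) (X1 X2 Y : finType) (q : X1 -> X2 -> Y -> R).
Implicit Types (f g P : jdist R X1 X2 Y) (D : set (jdist R X1 X2 Y)).

Lemma emin_lbound D (F : jdist R X1 X2 Y -> R) f : D f -> (emin D F <= (F f)%:E)%E.
Proof. by move=> Df; apply: ereal_inf_lbound; exists f. Qed.

Lemma emin_ltP D (F : jdist R X1 X2 Y -> R) (x : R) :
  (emin D F < x%:E)%E -> exists2 f, D f & F f < x.
Proof. by move=> /ereal_inf_lt[_ [f Df <-]]; rewrite lte_fin; exists f. Qed.

Lemma emin_mono D D' (F F' : jdist R X1 X2 Y -> R) :
  (forall f, D f -> D' f /\ F' f <= F f) -> (emin D' F' <= emin D F)%E.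
Proof.
move=> DD'; apply: le_ereal_inf_tmp => _ [f Df <-]; have [D'f le] := DD' f Df.
by apply: (le_trans (emin_lbound F' D'f)); rewrite lee_fin.
Qed.

Lemma G_m12 P f : G q P f -> m12 f = m12 P.
Proof. by case=> _ [e _]; apply: funext. Qed.

Lemma emin_D1_le_R1' P :
  (emin (D1 q P) (fun f => I_1_Y_g2 f + I_1_2 f)%R <= R1' q P)%E.
Proof.
apply: emin_mono => f [Gf m2Y_f]; split; last by rewrite I_1_2Y_chain.
have [pmf_f [_ Eq_f]] := Gf.
by split=> //; split; [rewrite (m1_eq_of_m12 (G_m12 Gf))|].
Qed.

Lemma emin_D2_le_R2' P : I_1_2 P = 0 ->
  (emin (D2 q P) (fun f => I_2_Y_g1 f + I_1_2 f)%R <= R2' q P)%E.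
Proof.
move=> indepP; apply: emin_mono => f [Gf m1Y_f].
split; last by rewrite (I_1_2_eq_of_m12 (G_m12 Gf)) indepP addr0.
have [pmf_f [_ Eq_f]] := Gf.
by split=> //; split; [rewrite (m2_eq_of_m12 (G_m12 Gf))|].
Qed.

Lemma L0_mix P l f g : 0 <= l <= 1 -> L0 q P f -> L0 q P g -> L0 q P (mix l f g).
Proof.
move=> l01 [Gf mY_f] [Gg mY_g]; have [l0 l1] := andP l01.
have [pmf_f [_ Eq_f]] := Gf; have [pmf_g [_ Eq_g]] := Gg.
split; last by move=> y; rewrite mY_mix mY_f mY_g; ring.
split; first exact: pmf_mix.
split=> [u|]; first by rewrite m12_mix (G_m12 Gf) (G_m12 Gg); ring.
rewrite Eq_mix.
have : l * Eq q P <= l * Eq q f by rewrite ler_wpM2l.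
have : (1 - l) * Eq q P <= (1 - l) * Eq q g by rewrite ler_wpM2l // subr_ge0.
lra.
Qed.

Lemma D0_of_L0 P (R1 R2 : R) f :
  L0 q P f -> I_1_Y f <= R1 -> I_2_Y f <= R2 -> D0 q P R1 R2 f.
Proof.
move=> [Gf mY_f] h1 h2; have [pmf_f [_ Eq_f]] := Gf.
split=> //; split; first by rewrite (m1_eq_of_m12 (G_m12 Gf)).
by split; first by rewrite (m2_eq_of_m12 (G_m12 Gf)).
Qed.

Section SumRate.
Variables (P : jdist R X1 X2 Y) (R1 R2 : R).
Hypothesis indepP : I_1_2 P = 0.

Lemma L0_I_1_2 f : L0 q P f -> I_1_2 f = 0.
Proof. by case=> Gf _; rewrite (I_1_2_eq_of_m12 (G_m12 Gf)). Qed.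

Lemma L0_I_1_Y_add_I_2_Y_le f : L0 q P f -> I_1_Y f + I_2_Y f <= I_12_Y f.
Proof.
by move=> Lf; have := I_1_Y_add_I_2_Y_le Lf.1.1; rewrite L0_I_1_2 // addr0.
Qed.

Lemma L0_mix_below_rates f g : L0 q P f -> L0 q P g ->
  I_1_Y f < R1 -> I_12_Y f < R1 + R2 -> I_2_Y g < R2 -> I_12_Y g < R1 + R2 ->
  exists2 h, L0 q P h & [/\ I_1_Y h <= R1, I_2_Y h <= R2 & I_12_Y h < R1 + R2].
Proof.
move=> Lf Lg f1 f12 g2 g12.
have [f2|f2] := leP (I_2_Y f) R2; first by exists f => //; split=> //; exact: ltW.
have [g1|g1] := leP (I_1_Y g) R1; first by exists g => //; split=> //; exact: ltW.
have [l l01 [mix1 mix2]] : exists2 l, 0 < l < 1 &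
    l * I_1_Y f + (1 - l) * I_1_Y g = R1 /\ l * I_2_Y f + (1 - l) * I_2_Y g < R2.
  by apply: convex_comb_crossing; rewrite ?f1 ?g1 //;
    apply: le_lt_trans (L0_I_1_Y_add_I_2_Y_le _) _.
have pmf_f := Lf.1.1; have pmf_g := Lg.1.1.
have m12_fg : m12 f = m12 g by rewrite (G_m12 Lf.1) (G_m12 Lg.1).
have mY_fg : mY f = mY g by apply: funext => y; rewrite Lf.2 Lg.2.
have [l_gt0 l_lt1] := andP l01.
exists (mix l f g); first by apply: L0_mix; rewrite ?ltW.
split.
- by rewrite -mix1; apply: I_1_Y_mix => //; exact: m1_eq_of_m12.
- by apply: ltW; apply: le_lt_trans mix2; apply: I_2_Y_mix => //; exact: m2_eq_of_m12.
- by have := I_12_Y_mix l01 pmf_f pmf_g mY_fg m12_fg; nra.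
Qed.

Lemma R1''_or_R2'' :
  elt (R1 + R2) (emin (D0 q P R1 R2) (fun f => I_12_Y f + I_1_2 f)) ->
  ele R1 (R1'' q P R2) \/ ele R2 (R2'' q P R1).
Proof.
move=> sum_rate; have [|nR1] := pselect (ele R1 (R1'' q P R2)); [by left|right].
rewrite /ele leNgt; apply/negP => /emin_ltP[g Lg gR2].
have /emin_ltP[f Lf fR1] : (R1'' q P R2 < R1%:E)%E by rewrite ltNge; apply/negP.
have f_pos := pos_part_ge0 (I_2_Y_g1 f - R2).
have f_le := le_pos_part (I_2_Y_g1 f - R2).
have g_pos := pos_part_ge0 (I_1_2Y g - R1).
have g_le := le_pos_part (I_1_2Y g - R1).
have f_chain := I_12_Y_chain1 f; have g_chain := I_12_Y_chain2 g.
have g_indep := L0_I_1_2 Lg.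
have f1 : I_1_Y f < R1 by lra.
have f12 : I_12_Y f < R1 + R2 by lra.
have g2 : I_2_Y g < R2 by lra.
have g12 : I_12_Y g < R1 + R2 by lra.
have [h Lh [h1 h2 h12]] := L0_mix_below_rates Lf Lg f1 f12 g2 g12.
have := lt_le_trans sum_rate (emin_lbound _ (D0_of_L0 Lh h1 h2)).
by rewrite lte_fin (L0_I_1_2 Lh) addr0 => /(lt_trans h12); rewrite ltxx.
Qed.

End SumRate.

End RateBounds.

Lemma RLM_P_sub_Rcog_P (R : realType) (X1 X2 Y : finType)
    (W q : X1 -> X2 -> Y -> R) (p1 : X1 -> R) (p2 : X2 -> R) :
  is_channel W -> is_pmf p1 -> is_pmf p2 ->
  RLM_P W q p1 p2 `<=` Rcog_P W q (fun a b => p1 a * p2 b).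
Proof.
move=> W_channel pmf_p1 pmf_p2 [R1 R2] [/= R1_ge0 [R2_ge0 [rate1 [rate2 sum_rate]]]].
have indepP := I_1_2_Pprod pmf_p1 pmf_p2 W_channel.
split=> //; exists R1, 0; rewrite /= add0r addr0.
do 3!split=> //; split; [|split].
- exact: ltW (lt_le_trans rate1 (emin_D1_le_R1' _ _)).
- exact: ltW (lt_le_trans rate2 (emin_D2_le_R2' _ indepP)).
- exact: R1''_or_R2''.
Qed.

Lemma conv2S (R : realType) (A B : set (R * R)) : A `<=` B -> conv2 A `<=` conv2 B.
Proof.
move=> AB z [n [w [a [w_ge0 [w_sum1 [Aa ->]]]]]].
by exists n, w, a; do 3!split=> //; move=> i; exact: AB.
Qed.

Theorem lemma2 (R : realType) (X1 X2 Y : finType)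
  (W q : X1 -> X2 -> Y -> R) :
  is_channel W -> R_LM W q `<=` R_cog_bin W q.
Proof.
move=> W_channel; apply: closureS; apply: conv2S => r [[p1 p2] [/= pmf_p1 pmf_p2]].
move/(RLM_P_sub_Rcog_P W_channel pmf_p1 pmf_p2) => cog_r.
by exists (fun a b => p1 a * p2 b) => //; exact: pmf_prod.
Qed.
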